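(* Let $U$ be a nonempty finite set, $R\subseteq U\times U$ serial and transitive, $h$ the height function of $(Reg(U,R),\subseteq)$, and let $M(Reg(U,R))$ be the matroid on $U$ whose independent sets are $\mathbf{I}(Reg(U,R);h)$, with rank function $r$. Then for every $X\subseteq U$, $$r(X)=\min_{Y\in Reg(U,R)}\{h(Y)+|X\setminus Y|\}.$$
   Context: $R_s(x)=\{y\in U\mid xRy\}$; $\underline{R}(X)=\{x\mid R_s(x)\subseteq X\}$, $\overline{R}(X)=\{x\mid R_s(x)\cap X\neq\emptyset\}$; $X$ is regular if $X=\underline{R}(\overline{R}(X))$, and $Reg(U,R)$ is the lattice of regular sets under inclusion, with least element $\emptyset$. $h(A)$ is the length of a maximal chain in $[\emptyset,A]$. $\mathbf{I}(Reg(U,R);h)=\{X\subseteq U\mid h(Y)\ge|X\cap Y|\ \forall Y\in Reg(U,R)\}$. The rank function of a matroid is $r(X)=\max\{|I|\mid I\subseteq X,\ I\text{ independent}\}$. *)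

From mathcomp Require Import all_boot.
Set Implicit Arguments. Unset Strict Implicit. Unset Printing Implicit Defensive.

Section Rough.
Variable T : finType.
Variable R : rel T.

Definition Rs (x : T) : {set T} := [set y | R x y].
Definition lowerR (X : {set T}) : {set T} := [set x | Rs x \subset X].
Definition upperR (X : {set T}) : {set T} := [set x | Rs x :&: X != set0].
Definition regular (X : {set T}) : bool := X == lowerR (upperR X).

Definition serial : Prop := forall x, exists y, R x y.
Definition transitiveR : Prop := forall x y z, R x y -> R y z -> R x z.

Definition reg_chain_in (A : {set T}) (C : {set {set T}}) : bool :=
  [forall Y in C, regular Y && (Y \subset A)] &&
  [forall Y in C, forall Z in C, (Y \subset Z) || (Z \subset Y)].

(* height h(A): length (= number of elements minus one) of a longest chain
   of regular sets in [emptyset, A] *)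
Definition height (A : {set T}) : nat :=
  \max_(C : {set {set T}} | reg_chain_in A C) (#|C|).-1.

Definition indepR (X : {set T}) : bool :=
  [forall Y : {set T}, regular Y ==> (#|X :&: Y| <= height Y)].

Definition rankR (X : {set T}) : nat :=
  \max_(I : {set T} | (I \subset X) && indepR I) #|I|.

End Rough.

From mathcomp Require Import all_boot zify.
Set Implicit Arguments. Unset Strict Implicit. Unset Printing Implicit Defensive.

(* A point t is terminal
   when each R-successor of t is also an R-predecessor of t; every point reaches
   a terminal point, and the successor sets Rs t of terminal points are the
   terminal classes.  A set Y is regular iff Y = regset S for a set S of
   terminal classes, where regset S collects the points all of whose reachable
   terminal classes lie in S; one can take S = tclasses Y, the terminal classes
   with a representative in Y.  So (Reg(U,R), \subset) is isomorphic to a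
   Boolean lattice of sets of terminal classes, and h(Y) = #|tclasses Y|
   (height_tclasses).  In particular h is modular (height_modular).

   Put g(A) = min over regular Y of h(Y) + |A \ Y| (rank_bound).  Independence
   of I says exactly |I| <= h(Y) + |I \ Y| for all regular Y, whence rank <= g.
   Conversely an independent subset of A of size g(A) is built by induction on
   |A|: adding a point x raises g by at most one, and when it does, x can be
   added to an independent subset of A (indep_augment, by modularity of h). *)

Definition subset_chain (aT : finType) (C : {set {set aT}}) : Prop :=
  {in C &, forall Z Z' : {set aT}, (Z \subset Z') || (Z' \subset Z)}.

(* A chain of subsets of B has at most #|B| + 1 members: cardinality is
   injective along a chain. *)
Lemma chain_card_le (aT : finType) (B : {set aT}) (C : {set {set aT}}) :
  subset_chain C -> (forall Z, Z \in C -> Z \subset B) -> #|C| <= #|B|.+1.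
Proof.
move=> chC sCB.
have card_inj : {in C &, injective (fun Z : {set aT} => #|Z|)}.
  move=> Z Z' HZ HZ' /= Ecard.
  case/orP: (chC Z Z' HZ HZ') => s.
  - by apply/eqP; rewrite eqEcard s Ecard leqnn.
  - by symmetry; apply/eqP; rewrite eqEcard s Ecard leqnn.
rewrite cardE -(size_map (fun Z : {set aT} => #|Z|)) -(size_iota 0 #|B|.+1).
apply: uniq_leq_size => [|n /mapP [Z]].
- by rewrite map_inj_in_uniq ?enum_uniq // => Z Z'; rewrite !mem_enum; apply: card_inj.
- by rewrite mem_enum mem_iota ltnS => /sCB /subset_leq_card leZB ->.
Qed.

Lemma exists_full_chain (aT : finType) (B : {set aT}) :
  exists2 C : {set {set aT}},
    subset_chain C /\ (forall Z, Z \in C -> Z \subset B) & #|C| = #|B|.+1.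
Proof.
move Hn: #|B| => n; elim: n B Hn => [|n IH] B cardB.
  exists [set B]; last by rewrite cards1.
  by split=> [Z Z' /set1P -> /set1P ->|Z /set1P ->]; rewrite subxx.
have /set0Pn [x Bx] : B != set0 by rewrite -card_gt0 cardB.
have cardB' : #|B :\ x| = n by move: cardB; rewrite (cardsD1 x) Bx => -[].
have [C [chC sCB] cardC] := IH _ cardB'.
have sCB1 Z : Z \in C -> Z \subset B.
  by move=> CZ; apply: subset_trans (sCB Z CZ) (subsetDl B [set x]).
exists (B |: C); first split.
- by move=> Z Z' /setU1P [->|CZ] /setU1P [->|CZ']; rewrite ?subxx ?sCB1 ?orbT ?chC.
- by move=> Z /setU1P [->|/sCB1].
rewrite cardsU1 cardC; suff /negPf -> : B \notin C by [].
by apply: contraL Bx => /sCB /subsetP /(_ x); rewrite !inE eqxx => /implyP.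
Qed.


Lemma card_setD_mono (aT : finType) (A B Y Z : {set aT}) :
  A \subset B -> Y \subset Z -> #|A :\: Z| <= #|B :\: Y|.
Proof. by move=> sAB sYZ; apply/subset_leq_card/(subset_trans (setSD _ sAB))/setDS. Qed.

Lemma card_setD_UI (aT : finType) (P Q Y1 Y2 : {set aT}) :
  #|(P :|: Q) :\: (Y1 :|: Y2)| + #|(P :&: Q) :\: (Y1 :&: Y2)| <=
  #|P :\: Y1| + #|Q :\: Y2|.
Proof.
rewrite -cardsUI -[leqRHS]cardsUI leq_add // subset_leq_card //; apply/subsetP => z;
  by rewrite !inE; case: (z \in P); case: (z \in Q); case: (z \in Y1); case: (z \in Y2).
Qed.

Section TerminalClasses.
Variables (T : finType) (R : rel T).
Hypotheses (serR : serial R) (trR : transitiveR R).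

Definition terminal (t : T) : bool := [forall s, R t s ==> R s t].

Lemma terminalP t : reflect (forall s, R t s -> R s t) (terminal t).
Proof.
apply: (iffP forallP) => Ht s; first exact/implyP.
exact/implyP/Ht.
Qed.

Lemma in_Rs t s : (s \in Rs R t) = R t s.
Proof. by rewrite inE. Qed.

Lemma Rs_succ a b : R a b -> Rs R b \subset Rs R a.
Proof. by move=> Rab; apply/subsetP => z; rewrite !in_Rs; apply: trR. Qed.

Lemma terminal_refl t : terminal t -> R t t.
Proof. by move=> /terminalP Ht; have [s Rts] := serR t; apply: trR Rts (Ht s Rts). Qed.

Lemma terminal_succ t s : terminal t -> R t s -> terminal s.
Proof.
move=> /terminalP Ht Rts; apply/terminalP => u Rsu.
exact: trR (Ht _ (trR Rts Rsu)) Rts.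
Qed.

Lemma terminal_Rs t s : terminal t -> R t s -> Rs R s = Rs R t.
Proof.
move=> Ht Rts; apply/eqP; rewrite eqEsubset Rs_succ //.
exact: Rs_succ ((terminalP _ Ht) s Rts).
Qed.

(* Every point x reaches a terminal point: if t is a successor of x with the
   fewest successors, every successor of t is terminal. *)
Lemma exists_terminal x : exists2 t, terminal t & R x t.
Proof.
have [y0 Rxy0] := serR x.
have [t Rxt t_min] := arg_minnP (fun y => #|Rs R y|) Rxy0.
have Rs_eq v : R t v -> Rs R v = Rs R t.
  move=> Rtv; apply/eqP; rewrite eqEcard Rs_succ //.
  exact: t_min (trR Rxt Rtv).
have [u Rtu] := serR t.
exists u; last exact: trR Rxt Rtu.
apply/terminalP => s Rus.
by rewrite -in_Rs (Rs_eq s (trR Rtu Rus)) in_Rs.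
Qed.

Definition tclasses (Y : {set T}) : {set {set T}} := Rs R @: [set t in Y | terminal t].

Definition regset (S : {set {set T}}) : {set T} :=
  [set x | [forall t, terminal t && R x t ==> (Rs R t \in S)]].

Lemma regsetP (S : {set {set T}}) x :
  reflect (forall t, terminal t -> R x t -> Rs R t \in S) (x \in regset S).
Proof.
rewrite inE; apply: (iffP forallP) => Hx t.
- by move=> Ht Rxt; apply: (implyP (Hx t)); rewrite Ht.
- by apply/implyP => /andP []; apply: Hx.
Qed.

Lemma terminal_in_regset (S : {set {set T}}) t :
  terminal t -> (t \in regset S) = (Rs R t \in S).
Proof.
move=> Ht; apply/regsetP/idP => [|St s _ Rts]; first by apply; rewrite ?terminal_refl.
by rewrite (terminal_Rs Ht Rts).
Qed.

Lemma mem_lower_upper (Y : {set T}) x :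
  reflect (forall y, R x y -> exists2 z, R y z & z \in Y) (x \in lowerR R (upperR R Y)).
Proof.
rewrite inE; apply: (iffP subsetP) => Hx y.
- rewrite -in_Rs => /Hx; rewrite inE => /set0Pn [z].
  by rewrite !inE => /andP []; exists z.
- rewrite in_Rs => /Hx [z Ryz Yz]; rewrite inE; apply/set0Pn.
  by exists z; rewrite !inE Ryz.
Qed.

Lemma regset_regular (S : {set {set T}}) : regular R (regset S).
Proof.
apply/eqP/setP => x; apply/idP/mem_lower_upper.
- move=> /regsetP Hx y Rxy; have [t Ht Ryt] := exists_terminal y.
  by exists t; rewrite // terminal_in_regset // Hx // (trR Rxy Ryt).
- move=> Hx; apply/regsetP => t Ht Rxt; have [z Rtz Sz] := Hx t Rxt.
  by rewrite -(terminal_Rs Ht Rtz) -terminal_in_regset // (terminal_succ Ht Rtz).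
Qed.

Lemma regular_regset (Y : {set T}) : regular R Y -> Y = regset (tclasses Y).
Proof.
move=> /eqP regY; apply/setP => x; rewrite {1}regY; apply/mem_lower_upper/regsetP.
- move=> Hx t Ht Rxt; have [z Rtz Yz] := Hx t Rxt.
  apply/imsetP; exists z; first by rewrite inE Yz (terminal_succ Ht Rtz).
  by rewrite (terminal_Rs Ht Rtz).
- move=> Hx y Rxy; have [t Ht Ryt] := exists_terminal y.
  have /imsetP [z] := Hx t Ht (trR Rxy Ryt).
  rewrite inE => /andP [Yz Hz] Ezt; exists z => //.
  by apply: trR Ryt _; rewrite -in_Rs Ezt in_Rs terminal_refl.
Qed.

Lemma regset_mono (S S' : {set {set T}}) : S \subset S' -> regset S \subset regset S'.
Proof.
move=> /subsetP sSS'; apply/subsetP => x /regsetP Hx.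
by apply/regsetP => t Ht Rxt; apply/sSS'/Hx.
Qed.

Lemma regsetI (S S' : {set {set T}}) : regset (S :&: S') = regset S :&: regset S'.
Proof.
apply/setP => x; rewrite in_setI; apply/regsetP/andP => [Hx|[/regsetP Hx /regsetP Hx']].
- by split; apply/regsetP => t Ht Rxt; have := Hx t Ht Rxt; rewrite inE => /andP [].
- by move=> t Ht Rxt; rewrite inE Hx ?Hx'.
Qed.

Lemma tclasses_mono (Y Z : {set T}) : Y \subset Z -> tclasses Y \subset tclasses Z.
Proof.
move=> sYZ; apply: imsetS; apply/subsetP => t.
by rewrite !inE => /andP [/(subsetP sYZ) -> ->].
Qed.

Lemma tclasses_regset (S : {set {set T}}) : tclasses (regset S) = S :&: tclasses setT.
Proof.
apply/setP => c; apply/imsetP/idP.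
- move=> [t]; rewrite inE => /andP [St Ht] ->.
  by rewrite inE -terminal_in_regset // St; apply/imsetP; exists t; rewrite ?inE.
- rewrite inE => /andP [Sc /imsetP [t]]; rewrite !inE /= => Ht Ect.
  by exists t; rewrite // inE Ht andbT terminal_in_regset // -Ect.
Qed.

Lemma regset_inj (S S' : {set {set T}}) :
  S \subset tclasses setT -> S' \subset tclasses setT -> regset S = regset S' -> S = S'.
Proof.
move=> /setIidPl ES /setIidPl ES' ESS'.
by rewrite -ES -ES' -!tclasses_regset ESS'.
Qed.

Lemma reg_chain_inP (A : {set T}) (C : {set {set T}}) :
  reflect (subset_chain C /\ forall Y, Y \in C -> regular R Y && (Y \subset A))
          (reg_chain_in R A C).
Proof.
apply: (iffP andP) => [[/forall_inP regC /forall_inP chC]|[chC regC]].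
- by split=> // Y Z CY CZ; apply: (forall_inP (chC Y CY)).
- by split; apply/forall_inP => // Y CY; apply/forall_inP => Z CZ; apply: chC.
Qed.

(* The height of a regular set is its number of terminal classes: chains of
   regular sets correspond to chains of sets of terminal classes. *)
Lemma height_tclasses (Y : {set T}) : regular R Y -> height R Y = #|tclasses Y|.
Proof.
move=> regY; apply/eqP; rewrite eqn_leq; apply/andP; split.
- apply/bigmax_leqP => C /reg_chain_inP [chC regC].
  have tclasses_inj : {in C &, injective tclasses}.
    move=> Z Z' /regC /andP [regZ _] /regC /andP [regZ' _] E.
    by rewrite (regular_regset regZ) (regular_regset regZ') E.
  rewrite -subn1 leq_subLR add1n -(card_in_imset tclasses_inj).
  apply: chain_card_le => [_ _ /imsetP [Z CZ ->] /imsetP [Z' CZ' ->]|_ /imsetP [Z CZ ->]].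
  + by case/orP: (chC Z Z' CZ CZ') => /tclasses_mono ->; rewrite ?orbT.
  + by apply: tclasses_mono; case/andP: (regC Z CZ).
- have [B [chB sB] cardB] := exists_full_chain (tclasses Y).
  have sBT S : S \in B -> S \subset tclasses setT.
    by move=> /sB sSY; apply: subset_trans sSY (tclasses_mono (subsetT Y)).
  have regset_injB : {in B &, injective regset}.
    by move=> S S' /sBT ? /sBT ?; apply: regset_inj.
  rewrite -[#|tclasses Y|]/(#|tclasses Y|.+1.-1) -cardB -(card_in_imset regset_injB).
  apply: leq_bigmax_cond; apply/reg_chain_inP; split.
  + move=> _ _ /imsetP [S BS ->] /imsetP [S' BS' ->].
    by case/orP: (chB S S' BS BS') => /regset_mono ->; rewrite ?orbT.
  + move=> _ /imsetP [S BS ->]; rewrite regset_regular (regular_regset regY).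
    exact: regset_mono (sB S BS).
Qed.

Lemma height_modular (Y1 Y2 : {set T}) : regular R Y1 -> regular R Y2 ->
  regular R (Y1 :&: Y2) /\
  exists2 J, regular R J /\ Y1 :|: Y2 \subset J &
    height R J + height R (Y1 :&: Y2) = height R Y1 + height R Y2.
Proof.
move=> reg1 reg2; set S1 := tclasses Y1; set S2 := tclasses Y2.
have E12 : Y1 :&: Y2 = regset (S1 :&: S2) by rewrite regsetI -!regular_regset.
have sST : S1 :|: S2 \subset tclasses setT by rewrite subUset !tclasses_mono ?subsetT.
split; first by rewrite E12 regset_regular.
exists (regset (S1 :|: S2)); first split.
- exact: regset_regular.
- rewrite subUset {1}(regular_regset reg1) {1}(regular_regset reg2).
  by rewrite !regset_mono ?subsetUl ?subsetUr.
- rewrite E12 !height_tclasses ?regset_regular // !tclasses_regset.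
  rewrite (setIidPl sST) (setIidPl (subset_trans (subsetIl S1 S2) _)) ?cardsUI //.
  exact: subset_trans (subsetUl S1 S2) sST.
Qed.

Lemma regular_set0 : regular R set0.
Proof.
apply/eqP/setP => x; rewrite !inE; apply/esym/negbTE/subsetPn.
by have [y Rxy] := serR x; exists y; rewrite !inE ?setI0 ?eqxx.
Qed.

Lemma height_set0 : height R set0 = 0.
Proof.
rewrite height_tclasses ?regular_set0 //; apply/eqP; rewrite cards_eq0 imset_eq0.
by apply/eqP/setP => t; rewrite !inE.
Qed.

End TerminalClasses.

Section RankFormula.
Variables (T : finType) (R : rel T).
Hypotheses (serR : serial R) (trR : transitiveR R).

Lemma indep_iff (I : {set T}) :
  indepR R I <-> forall Y, regular R Y -> #|I| <= height R Y + #|I :\: Y|.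
Proof.
split=> [/forallP indI Y regY | indI].
- by rewrite -(cardsID Y I) leq_add2r (implyP (indI Y) regY).
- apply/forallP => Y; apply/implyP => regY.
  by have := indI Y regY; rewrite -(cardsID Y I) leq_add2r.
Qed.

Lemma indep_card_le (A I Y : {set T}) :
  I \subset A -> indepR R I -> regular R Y -> #|I| <= height R Y + #|A :\: Y|.
Proof.
move=> sIA /indep_iff indI regY; apply: leq_trans (indI Y regY) _.
by rewrite leq_add2l card_setD_mono.
Qed.

Definition minimizer (A : {set T}) : {set T} :=
  [arg min_(Y < set0 | regular R Y) (height R Y + #|A :\: Y|)].

Definition rank_bound (A : {set T}) : nat :=
  height R (minimizer A) + #|A :\: minimizer A|.

Lemma minimizerP (A : {set T}) : regular R (minimizer A) /\
  forall Y, regular R Y -> rank_bound A <= height R Y + #|A :\: Y|.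
Proof.
by rewrite /rank_bound /minimizer; case: arg_minnP; first exact: regular_set0 serR.
Qed.

Lemma rank_bound_mono (A B : {set T}) : A \subset B -> rank_bound A <= rank_bound B.
Proof.
move=> sAB; have [regB _] := minimizerP B; have [_ minA] := minimizerP A.
by apply: leq_trans (minA _ regB) _; rewrite leq_add2l card_setD_mono.
Qed.

Lemma rank_bound_addS (A : {set T}) x : rank_bound (x |: A) <= (rank_bound A).+1.
Proof.
have [regA _] := minimizerP A; have [_ minxA] := minimizerP (x |: A).
apply: leq_trans (minxA _ regA) _; rewrite /rank_bound -addnS leq_add2l.
apply: leq_trans (subset_leq_card (_ : _ \subset x |: (A :\: minimizer A))) _.
  by apply/subsetP => z; rewrite !inE; case: (z == x).
by rewrite cardsU1 addnC -addn1 leq_add2l leq_b1.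
Qed.

(* For regular Y, compare with the minimizer Y'
   of A and a modular upper bound J of Y and Y'. *)
Lemma indep_augment (A I : {set T}) x :
  I \subset A -> indepR R I -> rank_bound A < rank_bound (x |: A) -> indepR R (x |: I).
Proof.
move=> sIA /indep_iff indI lt_rb; apply/indep_iff => Y regY.
have [regY' _] := minimizerP A; set Y' := minimizer A in regY'.
have rb_A : rank_bound A = height R Y' + #|A :\: Y'| by [].
have [regYY' [J [regJ sJ] hJ]] := height_modular serR trR regY regY'.
have min_J := (minimizerP (x |: A)).2 J regJ.
have indI_YY' := indI _ regYY'.
have count := card_setD_UI (x |: I) A Y Y'.
have le_xA_J : #|(x |: A) :\: J| <= #|((x |: I) :|: A) :\: (Y :|: Y')|.
  by apply: card_setD_mono sJ; rewrite -setUA setUS // subsetUr.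
have le_I_YY' : #|I :\: (Y :&: Y')| <= #|((x |: I) :&: A) :\: (Y :&: Y')|.
  by apply: card_setD_mono (subxx _); rewrite subsetI subsetUr.
have card_xI : #|x |: I| <= #|I|.+1 by rewrite cardsU1 addnC -addn1 leq_add2l leq_b1.
lia.
Qed.

Lemma exists_indep_rank_bound (A : {set T}) :
  exists2 I : {set T}, (I \subset A) && indepR R I & #|I| = rank_bound A.
Proof.
move Hn: #|A| => n; elim: n A Hn => [|n IH] A cardA.
  have -> : A = set0 by apply/eqP; rewrite -cards_eq0 cardA.
  exists set0; first by rewrite sub0set; apply/indep_iff => Y _; rewrite cards0.
  apply/esym/eqP; rewrite cards0 -leqn0.
  apply: leq_trans ((minimizerP set0).2 _ (regular_set0 serR)) _.
  by rewrite setD0 cards0 (height_set0 serR trR).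
have /set0Pn [x Ax] : A != set0 by rewrite -card_gt0 cardA.
have cardA' : #|A :\ x| = n by move: cardA; rewrite (cardsD1 x) Ax => -[].
have [I /andP [sIA' indI] cardI] := IH _ cardA'.
have sIA : I \subset A := subset_trans sIA' (subsetDl A [set x]).
have le_rb := rank_bound_mono (subsetDl A [set x]).
have le_rbS := rank_bound_addS (A :\ x) x; rewrite setD1K // in le_rbS.
have [lt_rb|ge_rb] := ltnP (rank_bound (A :\ x)) (rank_bound A).
- exists (x |: I); first by rewrite subUset sub1set Ax sIA (indep_augment sIA') ?setD1K.
  have xNI : x \notin I by apply: contraL Ax => /(subsetP sIA'); rewrite !inE eqxx.
  rewrite cardsU1 xNI cardI.
  by apply/eqP; rewrite eqn_leq le_rbS add1n lt_rb.
- by exists I; rewrite ?sIA // cardI; apply/eqP; rewrite eqn_leq le_rb.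
Qed.

End RankFormula.

Theorem proposition3 (T : finType) (R : rel T)
  (hne : 0 < #|T|) (hser : serial R) (htr : transitiveR R) (X : {set T}) :
  (forall Y : {set T}, regular R Y -> rankR R X <= height R Y + #|X :\: Y|) /\
  (exists2 Y : {set T}, regular R Y & rankR R X = height R Y + #|X :\: Y|).
Proof.
have rank_le Y : regular R Y -> rankR R X <= height R Y + #|X :\: Y|.
  by move=> regY; apply/bigmax_leqP => I /andP [sIX indI]; apply: indep_card_le.
split=> //; have [regYX _] := minimizerP hser X; exists (minimizer R X) => //.
apply/eqP; rewrite eqn_leq rank_le //= -/(rank_bound R X).
have [I sI_indI <-] := exists_indep_rank_bound hser htr X.
exact: leq_bigmax_cond.
Qed.
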